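(* Let $\alpha\in(0,1)$ and $\delta>0$. For all $t,s\in\delta\mathbb Z\setminus\{0\}$, writing $t'=t-\frac\delta2\mathrm{sgn}(t)$ and $s'=s-\frac\delta2\mathrm{sgn}(s)$, $$\mathrm{Cov}\Big(\frac{\sqrt2B_\alpha(t')}{|t'|^{\alpha/2}},\frac{\sqrt2B_\alpha(s')}{|s'|^{\alpha/2}}\Big)\le\mathrm{Cov}\Big(\frac{\sqrt2B_\alpha(t)}{|t|^{\alpha/2}},\frac{\sqrt2B_\alpha(s)}{|s|^{\alpha/2}}\Big).$$
   Context: $B_\alpha$ is fractional Brownian motion with $\mathrm{Cov}(B_\alpha(t),B_\alpha(s))=\frac{|t|^\alpha+|s|^\alpha-|t-s|^\alpha}{2}$, $t,s\in\mathbb R$; $\mathrm{sgn}$ is the sign function. *)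

From HB Require Import structures.
From mathcomp Require Import all_boot all_order all_algebra.
From mathcomp Require Import all_classical all_reals all_analysis.
Set Implicit Arguments. Unset Strict Implicit. Unset Printing Implicit Defensive.
Import Order.TTheory GRing.Theory Num.Theory.
Local Open Scope ring_scope.

Definition fbm_cov {R : realType} (alpha t s : R) : R :=
  (`|t| `^ alpha + `|s| `^ alpha - `|t - s| `^ alpha) / 2.

(* B : R -> (T -> R) is a fractional Brownian motion with parameter alpha on
   the probability space P, as far as second-order structure is concerned:
   each B t is a (measurable) square-integrable random variable, centered,
   with the fBm covariance. *)
Definition is_fBm {d} {T : measurableType d} {R : realType}
    (P : probability T R) (alpha : R) (B : R -> T -> R) : Prop :=
  (forall t, B t \in Lfun P 2%:E) /\
  (forall t, ('E_P[B t])%E = 0%E) /\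
  (forall t s, covariance P (B t) (B s) = (fbm_cov alpha t s)%:E).

Definition in_lattice_nz {R : realType} (delta t : R) : Prop :=
  exists k : int, k != 0 /\ t = k%:~R * delta.

Definition shift_half {R : realType} (delta t : R) : R :=
  t - delta / 2 * Num.sg t.

Definition normB {T : Type} {R : realType} (alpha : R) (B : R -> T -> R) (t : R)
  : T -> R :=
  fun w => Num.sqrt 2 * B t w / `|t| `^ (alpha / 2).

From HB Require Import structures.
From mathcomp Require Import all_boot all_order all_algebra.
From mathcomp Require Import all_classical all_reals all_analysis.
From mathcomp Require Import ring lra.
Import Order.TTheory GRing.Theory Num.Theory.
Local Open Scope ring_scope.

(* Write h = delta/2.  By bilinearity of the covariance, the
   covariance of the normalized variables sqrt 2 B(t) / |t|^(a/2) is
     (|t|^a + |s|^a - |t - s|^a) / (|t|^(a/2) |s|^(a/2)),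
   and since |t - s| = ||t| - e |s|| with e = sg t sg s in {1, -1}, this is
   the kernel  K_e(|t|, |s|) = (p^a + q^a - |p - e q|^a) / (p^(a/2) q^(a/2)).
   The half-step shift keeps the sign of a lattice point t and replaces |t| by
   |t| - h, so the theorem is the inequality K_e(p - h, q - h) <= K_e(p, q)
   for h < p, q.  The kernel is symmetric and homogeneous of degree 0: for
   p <= q it equals the profile f_e(p/q), where
     f_e(r) = r^(-a/2) (r^a + 1 - (1 - e r)^a).
   A derivative computation, combined with Bernoulli's inequality for negative
   exponents, shows that f_e is nondecreasing on (0, 1), and the shift only
   decreases the ratio: (p - h)/(q - h) <= p/q. *)

Section NormalizedKernel.
Context {R : realType}.
Variable a : R.

Lemma bernoulli_powR_npos (x p : R) : 0 < x -> p <= 0 -> 1 + p * (x - 1) <= x `^ p.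
Proof.
move=> x_gt0 p_le0.
have ln_le : ln x <= x - 1.
  by have := expR_ge1Dx (ln x); rewrite lnK ?posrE //; lra.
have exp_ge : 1 + p * ln x <= x `^ p.
  by rewrite /powR gt_eqF // mulrC; exact: expR_ge1Dx.
have : p * (x - 1) <= p * ln x by rewrite ler_wnM2l.
lra.
Qed.

Lemma sign_cases (e : R) : e ^+ 2 = 1 -> e = 1 \/ e = -1.
Proof. by move/eqP; rewrite sqrf_eq1 => /orP[] /eqP; [left | right]. Qed.

Definition profile (e r : R) : R :=
  r `^ (- (a / 2)) * (r `^ a + 1 - (1 - e * r) `^ a).

Lemma profile_derive (e r : R) : 0 < a -> 0 < r -> 0 < 1 - e * r ->
  is_derive r 1 (profile e)
    (a / 2 * r `^ (- (a / 2) - 1) * (r `^ a - 1 + (1 + e * r) * (1 - e * r) `^ (a - 1))).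
Proof.
move=> a_gt0 r_gt0 u_gt0.
have du : is_derive r 1 (fun x : R => 1 - e * x) (- e).
  have := is_deriveB (is_derive_cst (1 : R) r 1) (is_deriveZ e (is_derive_id r 1)).
  by rewrite sub0r /GRing.scale /= mulr1.
have dpow_u : is_derive r 1 ((fun x : R => x `^ a) \o (fun x : R => 1 - e * x))
    (a * (1 - e * r) `^ (a - 1) * - e).
  by apply: is_derive1_comp => //; exact: is_derive1_powR.
have := is_deriveM (is_derive1_powR (- (a / 2)) r_gt0)
  (is_deriveB (is_deriveD (is_derive1_powR a r_gt0) (is_derive_cst (1 : R) r 1)) dpow_u).
move/is_derive_eq; apply.
rewrite /= /GRing.scale /=.
have powr_a : r `^ a = r * r `^ (a - 1) by rewrite mulr_powRB1 // ltW.
have powu_a : (1 - e * r) `^ a = (1 - e * r) * (1 - e * r) `^ (a - 1).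
  by rewrite mulr_powRB1 // ltW.
have powr_half : r `^ (- (a / 2)) = r * r `^ (- (a / 2) - 1).
  rewrite -{2}(powRr1 (ltW r_gt0)) -powRD; last by apply/implyP => _; rewrite gt_eqF.
  by congr (_ `^ _); ring.
by rewrite !fctE powr_a powu_a powr_half; field.
Qed.

(* The bracket in f_e' is nonnegative on (0, 1); for e = -1 this is where
   Bernoulli's inequality is needed, applied at r and at 1 + r. *)
Lemma profile_slope_ge0 (e r : R) : 0 < a -> a < 1 -> e ^+ 2 = 1 -> 0 < r -> r < 1 ->
  0 <= r `^ a - 1 + (1 + e * r) * (1 - e * r) `^ (a - 1).
Proof.
move=> a_gt0 a_lt1 /sign_cases [] -> r_gt0 r_lt1; rewrite ?mul1r ?mulN1r ?opprK.
- have w_ge1 : 1 <= (1 - r) `^ (a - 1).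
    have : 1 + (a - 1) * (1 - r - 1) <= (1 - r) `^ (a - 1).
      by apply: bernoulli_powR_npos; lra.
    nra.
  have : 0 <= (1 + r) * ((1 - r) `^ (a - 1) - 1) by apply: mulr_ge0; lra.
  have := powR_ge0 r a; lra.
- have powr_a : r `^ a = r * r `^ (a - 1) by rewrite mulr_powRB1 // ltW.
  have br : 1 + (a - 1) * (r - 1) <= r `^ (a - 1) by apply: bernoulli_powR_npos; lra.
  have b1r : 1 + (a - 1) * (1 + r - 1) <= (1 + r) `^ (a - 1).
    by apply: bernoulli_powR_npos; lra.
  rewrite powr_a; nra.
Qed.

Lemma one_sub_sign_gt0 (e r : R) : e ^+ 2 = 1 -> r < 1 -> -1 < r -> 0 < 1 - e * r.
Proof. by move=> /sign_cases [] -> *; lra. Qed.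

Lemma profile_ndecr (e r1 r2 : R) : 0 < a -> a < 1 ->
  e ^+ 2 = 1 -> 0 < r1 -> r1 <= r2 -> r2 < 1 -> profile e r1 <= profile e r2.
Proof.
move=> a_gt0 a_lt1 e2 r1_gt0 r12 r2_lt1.
have deriv x : x \in `[r1, r2] -> is_derive x 1 (profile e)
    (a / 2 * x `^ (- (a / 2) - 1) * (x `^ a - 1 + (1 + e * x) * (1 - e * x) `^ (a - 1))).
  rewrite in_itv /= => /andP[? ?].
  by apply: profile_derive => //; [lra | apply: one_sub_sign_gt0; lra].
apply: (@ger0_derive1_ndecr _ _ r1 r2) => //.
- by move=> x /subset_itv_oo_cc /deriv [].
- move=> x x_in; rewrite derive1E; have [_ ->] := deriv x (subset_itv_oo_cc x_in).
  move: x_in; rewrite in_itv /= => /andP[? ?].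
  apply: mulr_ge0; first by apply: mulr_ge0; [lra | exact: powR_ge0].
  by apply: profile_slope_ge0 => //; lra.
- by apply: derivable_within_continuous => x /deriv [].
Qed.

Definition kernel (e p q : R) : R :=
  (p `^ a + q `^ a - `|p - e * q| `^ a) / (p `^ (a / 2) * q `^ (a / 2)).

Lemma kernel_sym (e p q : R) : e ^+ 2 = 1 -> kernel e p q = kernel e q p.
Proof.
rewrite /kernel (addrC (p `^ a)) (mulrC (p `^ _)).
move=> /sign_cases [] ->; first by rewrite !mul1r distrC.
by rewrite !mulN1r !opprK (addrC p).
Qed.

Lemma powR_half_sq (x : R) : 0 < x -> x `^ a = x `^ (a / 2) * x `^ (a / 2).
Proof.
move=> x_gt0; rewrite -powRD; last by apply/implyP => _; rewrite gt_eqF.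
by congr (_ `^ _); field.
Qed.

Lemma kernel_profile (e p q : R) : e ^+ 2 = 1 -> 0 < p -> p <= q ->
  kernel e p q = profile e (p / q).
Proof.
move=> e2 p_gt0 pq; have q_gt0 : 0 < q by lra.
suff scaled r : 0 < r -> r <= 1 -> kernel e (r * q) q = profile e r.
  have p_eq : p = p / q * q by rewrite divfK // gt_eqF.
  rewrite {1}p_eq; apply: scaled; first exact: divr_gt0.
  by rewrite ler_pdivrMr // mul1r.
move=> r_gt0 r_le1.
have u_ge0 : 0 <= 1 - e * r by case: (sign_cases _ e2) => ->; lra.
have dist : `|r * q - e * q| = (1 - e * r) * q.
  case: (sign_cases _ e2) => ->.
  + by rewrite mul1r ler0_norm; nra.
  + by rewrite mulN1r opprK ger0_norm; nra.
rewrite /kernel /profile dist !powRM ?(ltW r_gt0) ?(ltW q_gt0) //.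
rewrite powRN (powR_half_sq _ q_gt0) (powR_half_sq _ r_gt0).
have u0 : r `^ (a / 2) != 0 by rewrite gt_eqF // powR_gt0.
have v0 : q `^ (a / 2) != 0 by rewrite gt_eqF // powR_gt0.
by field; rewrite u0 v0.
Qed.

Lemma ratio_shift_le (h p q : R) : 0 < h -> h < p -> p <= q -> (p - h) / (q - h) <= p / q.
Proof.
move=> h_gt0 hp pq.
rewrite ler_pdivrMr; last lra.
rewrite mulrAC ler_pdivlMr; last lra.
nra.
Qed.

Lemma kernel_shift_le (e h p q : R) : 0 < a -> a < 1 ->
  e ^+ 2 = 1 -> 0 < h -> h < p -> h < q -> kernel e (p - h) (q - h) <= kernel e p q.
Proof.
move=> a_gt0 a_lt1 e2; wlog pq : p q / p <= q => [wlog_pq h_gt0 hp hq|h_gt0 hp hq].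
  have [|qp] := lerP p q; first by move=> pq; exact: wlog_pq.
  by rewrite (kernel_sym _ (p - h)) // (kernel_sym _ p) //; apply: wlog_pq => //; exact: ltW.
rewrite !kernel_profile //; try lra.
have [<-|pq'] := eqVneq p q; first by rewrite !divff // gt_eqF //; lra.
apply: profile_ndecr => //; first by apply: divr_gt0; lra.
- exact: ratio_shift_le.
- by rewrite ltr_pdivrMr ?mul1r; lra.
Qed.

End NormalizedKernel.

Lemma cov_scale (d : measure_display) (T : measurableType d) (R : realType)
    (P : probability T R) (X Y : T -> R) (k l : R) :
  X \in Lfun P 2%:E -> Y \in Lfun P 2%:E ->
  covariance P (fun w => X w * k) (fun w => Y w * l) = ((k * l)%:E * covariance P X Y)%E.
Proof.
move=> X2 Y2.
have fin : (P setT \is a fin_num)%E by rewrite probability_setT.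
have X1 := Lfun_subset12 fin X2.
have Y1 := Lfun_subset12 fin Y2.
have lY2 : (l \o* Y)%R \in Lfun P 2%:E by apply: Lfun_scale => //; rewrite ler1n.
have lY1 := Lfun_subset12 fin lY2.
have -> : (fun w => X w * k) = (k \o* X)%R by [].
have -> : (fun w => Y w * l) = (l \o* Y)%R by [].
rewrite covarianceZl //; last exact: Lfun2_mul_Lfun1.
rewrite covarianceZr //; last exact: Lfun2_mul_Lfun1.
by rewrite muleA EFinM.
Qed.

Definition normalized_cov {R : realType} (alpha t s : R) : R :=
  2 * fbm_cov alpha t s / (`|t| `^ (alpha / 2) * `|s| `^ (alpha / 2)).

Lemma cov_normB (d : measure_display) (T : measurableType d) (R : realType)
    (P : probability T R) (alpha : R) (B : R -> T -> R) (t s : R) :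
  is_fBm P alpha B ->
  covariance P (normB alpha B t) (normB alpha B s) = (normalized_cov alpha t s)%:E.
Proof.
move=> [B_L2 [_ B_cov]].
have scaled u : normB alpha B u = (fun w => B u w * (Num.sqrt 2 / `|u| `^ (alpha / 2))).
  by apply/funeqP => w; rewrite /normB mulrAC mulrC mulrA.
rewrite !scaled cov_scale // B_cov -EFinM /normalized_cov; congr (_%:E).
have sqrt2 : Num.sqrt 2 * Num.sqrt 2 = 2 :> R by rewrite -expr2 sqr_sqrtr // ler0n.
rewrite invfM; set c := fbm_cov alpha t s.
transitivity (Num.sqrt 2 * Num.sqrt 2 * c * ((`|t| `^ (alpha / 2))^-1 * (`|s| `^ (alpha / 2))^-1)).
  by ring.
by rewrite sqrt2.
Qed.

(* Since |t - s| = ||t| - sg t sg s |s|| for t != 0, the normalized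
   covariance is the kernel with sign parameter sg t sg s. *)
Lemma normalized_cov_sign {R : realType} (alpha t s : R) : t != 0 ->
  normalized_cov alpha t s = kernel alpha (Num.sg t * Num.sg s) `|t| `|s|.
Proof.
move=> t_neq0.
have dist : `|t - s| = `|(`|t| - Num.sg t * Num.sg s * `|s|)|.
  have sgt2 : Num.sg t * Num.sg t = 1 by rewrite -expr2 sqr_sg t_neq0.
  rewrite {1}(numEsg t) {1}(numEsg s).
  have -> : Num.sg t * `|t| - Num.sg s * `|s| =
            Num.sg t * (`|t| - Num.sg t * Num.sg s * `|s|).
    by rewrite mulrBr !mulrA sgt2 mul1r.
  by rewrite normrM normr_sg t_neq0 mul1r.
by rewrite /normalized_cov /kernel /fbm_cov dist [2 * _]mulrC divfK ?pnatr_eq0.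
Qed.

Lemma lattice_norm_gt {R : realType} {delta t : R} : 0 < delta ->
  in_lattice_nz delta t -> delta / 2 < `|t|.
Proof.
move=> delta_gt0 [k [k_neq0 ->]].
have k_ge1 : 1 <= `|k%:~R : R| by rewrite -intr_norm ler1z -gtz0_ge1 normr_gt0.
rewrite normrM (gtr0_norm delta_gt0).
have : delta <= `|k%:~R : R| * delta by rewrite ler_peMl // ltW.
lra.
Qed.

Lemma shift_half_decomp {R : realType} {delta t : R} : 0 <= delta -> delta / 2 < `|t| ->
  Num.sg (shift_half delta t) = Num.sg t /\ `|shift_half delta t| = `|t| - delta / 2.
Proof.
move=> delta_ge0 t_far.
have t_neq0 : t != 0 by rewrite -normr_gt0; lra.
have gap : 0 < `|t| - delta / 2 by lra.
have -> : shift_half delta t = Num.sg t * (`|t| - delta / 2).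
  by rewrite /shift_half {1}(numEsg t); ring.
by rewrite sgrM sgr_id (gtr0_sg gap) mulr1 normrM normr_sg t_neq0 mul1r (gtr0_norm gap).
Qed.

Theorem mainTheorem7 (d : measure_display) (T : measurableType d) (R : realType)
    (P : probability T R) (alpha delta : R) (B : R -> T -> R) :
  0 < alpha -> alpha < 1 -> 0 < delta -> is_fBm P alpha B ->
  forall t s : R, in_lattice_nz delta t -> in_lattice_nz delta s ->
  (covariance P (normB alpha B (shift_half delta t)) (normB alpha B (shift_half delta s))
   <= covariance P (normB alpha B t) (normB alpha B s))%E.
Proof.
move=> alpha_gt0 alpha_lt1 delta_gt0 fBm t s t_lat s_lat.
have t_far := lattice_norm_gt delta_gt0 t_lat.
have s_far := lattice_norm_gt delta_gt0 s_lat.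
have [sg_t' norm_t'] := shift_half_decomp (ltW delta_gt0) t_far.
have [sg_s' norm_s'] := shift_half_decomp (ltW delta_gt0) s_far.
have neq0 (x : R) : delta / 2 < `|x| -> x != 0 by move=> ?; rewrite -normr_gt0; lra.
have [t_neq0 s_neq0] := (neq0 t t_far, neq0 s s_far).
have t'_neq0 : shift_half delta t != 0 by rewrite -sgr_eq0 sg_t' sgr_eq0.
rewrite !cov_normB // lee_fin !normalized_cov_sign // sg_t' sg_s' norm_t' norm_s'.
apply: kernel_shift_le => //; try lra.
by rewrite exprMn !sqr_sg t_neq0 s_neq0 mulr1.
Qed.
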